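(* Let $S^0$ be an adequate transversal of a quasi-adequate semigroup $S$. Then $I$ is a left regular subband and $\Lambda$ a right regular subband of $S$, and $E^0$ is a semilattice transversal of both $I$ and $\Lambda$, with $x^0\in V(x)\cap E^0$ for all $x\in I\cup\Lambda$. Moreover, if $x\in E^0$ then $x^0=x$.
   Context: For a semigroup $S$, $S^1$ is $S$ with an identity adjoined, $E(S)$ its idempotents, $V(x)$ the set of inverses of $x$, $\mathcal{L},\mathcal{R}$ Green's relations. $\mathcal{R}^\ast=\{(a,b):\forall x,y\in S^1,\ xa=ya\iff xb=yb\}$, $\mathcal{L}^\ast=\{(a,b):\forall x,y\in S^1,\ ax=ay\iff bx=by\}$. $S$ is abundant if each $\mathcal{R}^\ast$- and $\mathcal{L}^\ast$-class contains an idempotent; adequate if also idempotents commute (then $a^+$, $a^\ast$ are the unique idempotents $\mathcal{R}^\ast$-, resp. $\mathcal{L}^\ast$-related to $a$). Quasi-adequate: abundant with $E(S)$ a subsemigroup. An abundant subsemigroup $U$ of abundant $S$ is a $\ast$-subsemigroup if $\mathcal{L}^\ast(U)=\mathcal{L}^\ast(S)\cap(U\times U)$, $\mathcal{R}^\ast(U)=\mathcal{R}^\ast(S)\cap(U\times U)$. An adequate $\ast$-subsemigroup $S^0$ of abundant $S$ is an adequate transversal if each $x\in S$ has a unique $\overline{x}\in S^0$ and idempotents $e,f$ of $S$ (then unique, written $e_x,f_x$) with $x=e\overline{x}f$, $e\,\mathcal{L}\,\overline{x}^+$, $f\,\mathcal{R}\,\overline{x}^\ast$. $E^0=E(S^0)$,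 $I=\{e_x:x\in S\}$, $\Lambda=\{f_x:x\in S\}$. For regular $x\in S$, $x^0$ is the unique inverse of $x$ with $xx^0=e_x$ and $x^0x=f_x$. A left (right) regular band satisfies $xyx=xy$ ($xyx=yx$). $E^0$ is a semilattice transversal of a band $B$ if $E^0$ is a subsemilattice of $B$ and $|V(x)\cap E^0|=1$ for all $x\in B$. *)

Set Implicit Arguments.

Section Semigroup.
Variable T : Type.
Variable mul : T -> T -> T.

Definition associative_op : Prop :=
  forall a b c : T, mul a (mul b c) = mul (mul a b) c.

(* S^1 is represented by option T, None being the adjoined identity. *)
Definition lmul1 (x : option T) (a : T) : T :=
  match x with None => a | Some u => mul u a end.
Definition rmul1 (a : T) (x : option T) : T :=
  match x with None => a | Some u => mul a u end.
Definition in1 (U : T -> Prop) (x : option T) : Prop :=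
  match x with None => True | Some u => U u end.

Definition fullset : T -> Prop := fun _ => True.

Definition idempotent (e : T) : Prop := mul e e = e.

Definition greenL (a b : T) : Prop :=
  exists u v : option T, a = lmul1 u b /\ b = lmul1 v a.
Definition greenR (a b : T) : Prop :=
  exists u v : option T, a = rmul1 b u /\ b = rmul1 a v.

(* R* and L* computed inside a subsemigroup U (U = fullset gives those of S) *)
Definition Rstar_in (U : T -> Prop) (a b : T) : Prop :=
  forall x y : option T, in1 U x -> in1 U y ->
    (lmul1 x a = lmul1 y a <-> lmul1 x b = lmul1 y b).
Definition Lstar_in (U : T -> Prop) (a b : T) : Prop :=
  forall x y : option T, in1 U x -> in1 U y ->
    (rmul1 a x = rmul1 a y <-> rmul1 b x = rmul1 b y).

Definition subsemigroup (U : T -> Prop) : Prop :=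
  forall a b, U a -> U b -> U (mul a b).

Definition abundant_in (U : T -> Prop) : Prop :=
  subsemigroup U /\
  forall a, U a ->
    (exists e, U e /\ idempotent e /\ Rstar_in U a e) /\
    (exists f, U f /\ idempotent f /\ Lstar_in U a f).

Definition abundant : Prop := abundant_in fullset.

Definition quasi_adequate : Prop :=
  abundant /\ forall e f, idempotent e -> idempotent f -> idempotent (mul e f).

Definition adequate_in (U : T -> Prop) : Prop :=
  abundant_in U /\
  forall e f, U e -> U f -> idempotent e -> idempotent f -> mul e f = mul f e.

Definition star_subsemigroup (U : T -> Prop) : Prop :=
  abundant_in U /\
  (forall a b, U a -> U b -> (Lstar_in U a b <-> Lstar_in fullset a b)) /\
  (forall a b, U a -> U b -> (Rstar_in U a b <-> Rstar_in fullset a b)).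

Definition is_plus (S0 : T -> Prop) (a p : T) : Prop :=
  S0 p /\ idempotent p /\ Rstar_in S0 a p.
Definition is_star (S0 : T -> Prop) (a p : T) : Prop :=
  S0 p /\ idempotent p /\ Lstar_in S0 a p.

Definition decomp (S0 : T -> Prop) (x xb e f : T) : Prop :=
  S0 xb /\ idempotent e /\ idempotent f /\ x = mul (mul e xb) f /\
  (exists p, is_plus S0 xb p /\ greenL e p) /\
  (exists q, is_star S0 xb q /\ greenR f q).

Definition adequate_transversal (S0 : T -> Prop) : Prop :=
  adequate_in S0 /\ star_subsemigroup S0 /\
  forall x, (exists xb e f, decomp S0 x xb e f) /\
            (forall xb e f xb' e' f', decomp S0 x xb e f ->
                decomp S0 x xb' e' f' -> xb = xb').

Definition E0 (S0 : T -> Prop) (x : T) : Prop := S0 x /\ idempotent x.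
Definition Iset (S0 : T -> Prop) (e : T) : Prop :=
  exists x xb f, decomp S0 x xb e f.
Definition Lambdaset (S0 : T -> Prop) (f : T) : Prop :=
  exists x xb e, decomp S0 x xb e f.

Definition inverse_of (x y : T) : Prop := mul (mul x y) x = x /\ mul (mul y x) y = y.

Definition band (B : T -> Prop) : Prop :=
  subsemigroup B /\ forall x, B x -> idempotent x.
Definition left_regular_band (B : T -> Prop) : Prop :=
  band B /\ forall x y, B x -> B y -> mul (mul x y) x = mul x y.
Definition right_regular_band (B : T -> Prop) : Prop :=
  band B /\ forall x y, B x -> B y -> mul (mul x y) x = mul y x.

Definition semilattice_transversal (E B : T -> Prop) : Prop :=
  (forall x, E x -> B x) /\ subsemigroup E /\
  (forall x, E x -> idempotent x) /\
  (forall x y, E x -> E y -> mul x y = mul y x) /\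
  (forall x, B x -> exists y, (inverse_of x y /\ E y) /\
                  forall z, inverse_of x z /\ E z -> z = y).

Definition is_x0 (S0 : T -> Prop) (x y : T) : Prop :=
  inverse_of x y /\
  forall xb e f, decomp S0 x xb e f -> mul x y = e /\ mul y x = f.

End Semigroup.

(* Every idempotent g = e b f (decomposed through the transversal) has the middle
   factor b as an inverse in E0: with h = f e, one gets b h b = b, and then b R* b^+ and
   b L* b^* force b h = b^+ and h b = b^*, so b = b^+ b^* lies in E0. Conversely an
   inverse t in E0 of any x yields the decomposition x = (x t) t (t x), so such an
   inverse is unique and equals x^0. Hence I (resp. Lambda) consists of the idempotents
   L- (resp. R-) related to elements of E0. If e L p and f L q with p, q in E0, the
   E0-inverse of e f is p q, so e f L p q; and idempotents L-related to a common element
   absorb each other on the right, which gives e f e = e f. The statements about Lambda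
   are the duals, read off in the opposite semigroup. *)

From Stdlib Require Import Setoid Program.Basics.
Set Implicit Arguments.

(* [arewrite A H] rewrites with [H : u = v] (or [H : idempotent mul u]) modulo the
   associativity law [A]: everything is right-associated, and [u] is also found as a
   prefix of a longer product. *)
Ltac arewrite A H :=
  let H1 := fresh in let H2 := fresh in
  pose proof H as H1; try unfold idempotent in H1; repeat rewrite <- A in H1;
  lazymatch type of H1 with @eq ?T ?l ?r =>
  lazymatch l with ?m _ _ =>
    assert (H2 : forall x : T, m l x = m r x) by (intro; rewrite H1; reflexivity);
    repeat setoid_rewrite <- A in H2 end end;
  repeat rewrite <- A; (rewrite H1 || rewrite H2); repeat rewrite <- A; clear H1 H2.

Section Green.
Variables (T : Type) (mul : T -> T -> T).
Hypothesis mulA : associative_op mul.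
Local Infix "*" := mul.

Definition idem_L (e p : T) : Prop := e * p = e /\ p * e = p.
Definition idem_R (f q : T) : Prop := q * f = f /\ f * q = q.

Lemma idem_L_same_class e e' p : idem_L e p -> idem_L e' p -> e * e' = e.
Proof. intros [ep _] [_ pe']. rewrite <- ep at 1. rewrite <- mulA, pe'. exact ep. Qed.

Lemma greenL_idem_L e p : idempotent mul e -> idempotent mul p -> greenL mul e p -> idem_L e p.
Proof.
  intros Ie Ip [u [v [He Hp]]]; split.
  - destruct u as [u|]; simpl in He; rewrite He; [rewrite <- mulA, Ip|]; auto.
  - destruct v as [v|]; simpl in Hp; rewrite Hp; [rewrite <- mulA, Ie|]; auto.
Qed.

Lemma greenL_of_idem_L e p : idem_L e p -> greenL mul e p.
Proof. intros [ep pe]. exists (Some e), (Some p). simpl. auto. Qed.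
End Green.

Lemma flip_associative (T : Type) (mul : T -> T -> T) :
  associative_op mul -> associative_op (flip mul).
Proof. intros mulA a b c. unfold flip. symmetry. apply mulA. Qed.

Lemma greenR_idem_R (T : Type) (mul : T -> T -> T) (mulA : associative_op mul) f q :
  idempotent mul f -> idempotent mul q -> greenR mul f q -> idem_R mul f q.
Proof. exact (@greenL_idem_L T (flip mul) (flip_associative mulA) f q). Qed.

Lemma greenR_of_idem_R (T : Type) (mul : T -> T -> T) f q :
  idem_R mul f q -> greenR mul f q.
Proof. exact (@greenL_of_idem_L T (flip mul) f q). Qed.

Lemma inverse_of_flip (T : Type) (mul : T -> T -> T) (mulA : associative_op mul) x y :
  inverse_of (flip mul) x y <-> inverse_of mul x y.
Proof. unfold inverse_of, flip. rewrite !mulA. tauto. Qed.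

Section BandTransversal.
Variables (T : Type) (mul : T -> T -> T) (E : T -> Prop).
Hypothesis mulA : associative_op mul.
Hypothesis idempotent_mul :
  forall e f, idempotent mul e -> idempotent mul f -> idempotent mul (mul e f).
Hypothesis E_mul : subsemigroup mul E.
Hypothesis E_idem : forall p, E p -> idempotent mul p.
Hypothesis E_comm : forall p q, E p -> E q -> mul p q = mul q p.
Hypothesis E_inverse : forall g, idempotent mul g -> exists t, E t /\ inverse_of mul g t.
Hypothesis E_inverse_unique : forall g t t', idempotent mul g ->
  E t -> E t' -> inverse_of mul g t -> inverse_of mul g t' -> t = t'.
Local Infix "*" := mul.

Lemma idem_L_mul e f p q : idempotent mul e -> idempotent mul f -> E p -> E q ->
  idem_L mul e p -> idem_L mul f q -> idem_L mul (e * f) (p * q).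
Proof.
  intros Ie If Ep Eq [ep pe] [fq qf].
  destruct (E_inverse (idempotent_mul Ie If)) as [r [Er [efr ref]]].
  repeat rewrite <- mulA in efr, ref.
  assert (rq : r * q = r).
  { rewrite <- ref at 1. repeat rewrite <- mulA. rewrite (E_comm Er Eq).
    arewrite mulA fq. exact ref. }
  assert (rer : r * (e * r) = r).
  { rewrite <- ref at 2. arewrite mulA (idempotent_mul (E_idem Er) Ie). exact ref. }
  assert (rp : r * p = r).
  { rewrite <- rer at 1. repeat rewrite <- mulA. rewrite (E_comm Er Ep).
    arewrite mulA ep. exact rer. }
  assert (pqef : p * (q * (e * f)) = p * q).
  { rewrite (mulA p q), (E_comm Ep Eq). arewrite mulA pe.
    rewrite (mulA q p), <- (E_comm Ep Eq). arewrite mulA qf. reflexivity. }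
  assert (rpq : r * (p * q) = r) by (rewrite mulA, rp, rq; reflexivity).
  assert (r_pq : r = p * q).
  { rewrite <- rpq. rewrite <- pqef at 2. rewrite <- efr. arewrite mulA pqef.
    rewrite (mulA p q), (mulA (p * q)), (E_comm (E_mul Ep Eq) Er).
    arewrite mulA pqef. reflexivity. }
  subst r. split; [|rewrite <- mulA; exact pqef].
  rewrite <- efr at 2. arewrite mulA pqef. reflexivity.
Qed.

Section LeftBand.
Variable B : T -> Prop.
Hypothesis B_char : forall e, B e <-> idempotent mul e /\ exists p, E p /\ idem_L mul e p.

Lemma band_of_idem_L : band mul B.
Proof.
  split.
  - intros e f He Hf. apply B_char in He as [Ie [p [Ep eLp]]].
    apply B_char in Hf as [If [q [Eq fLq]]].
    apply B_char. split; [exact (idempotent_mul Ie If)|].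
    exists (p * q). split; [exact (E_mul Ep Eq)|exact (idem_L_mul Ie If Ep Eq eLp fLq)].
  - intros e He. exact (proj1 (proj1 (B_char e) He)).
Qed.

Lemma left_regular_band_of_idem_L : left_regular_band mul B.
Proof.
  split; [exact band_of_idem_L|].
  intros x y Hx Hy.
  apply B_char in Hx as [Ix [p [Ep xLp]]]. apply B_char in Hy as [Iy [q [Eq yLq]]].
  pose proof (idem_L_mul Ix Iy Ep Eq xLp yLq) as xyL.
  pose proof (idem_L_mul (idempotent_mul Ix Iy) Ix (E_mul Ep Eq) Ep xyL xLp) as xyxL.
  assert (pqp : p * q * p = p * q).
  { rewrite <- mulA, (E_comm Eq Ep), mulA. arewrite mulA (E_idem Ep). reflexivity. }
  rewrite pqp in xyxL.
  rewrite <- (idem_L_same_class mulA xyxL xyL).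
  arewrite mulA Ix. arewrite mulA (idempotent_mul Ix Iy). reflexivity.
Qed.

Lemma semilattice_transversal_of_idem_L : semilattice_transversal mul E B.
Proof.
  split; [|split; [exact E_mul|split; [exact E_idem|split; [exact E_comm|]]]].
  - intros p Ep. apply B_char. split; [exact (E_idem Ep)|].
    exists p. split; [exact Ep|]. split; apply E_idem; exact Ep.
  - intros x Hx. apply B_char in Hx as [Ix [p [Ep [xp px]]]].
    assert (xinv : inverse_of mul x p).
    { split; [rewrite xp; exact Ix|rewrite px; exact (E_idem Ep)]. }
    exists p. split; [split; [exact xinv|exact Ep]|].
    intros z [xz Ez]. exact (E_inverse_unique Ix Ez Ep xz xinv).
Qed.

Lemma left_regular_band_transversal_of_idem_L :
  left_regular_band mul B /\ semilattice_transversal mul E B.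
Proof. exact (conj left_regular_band_of_idem_L semilattice_transversal_of_idem_L). Qed.
End LeftBand.
End BandTransversal.

Lemma right_regular_band_of_flip (T : Type) (mul : T -> T -> T) (B : T -> Prop) :
  associative_op mul -> left_regular_band (flip mul) B -> right_regular_band mul B.
Proof.
  intros mulA [[Bmul Bidem] Breg]. split.
  - split; [intros a b Ha Hb; exact (Bmul b a Hb Ha)|exact Bidem].
  - intros x y Hx Hy. rewrite <- mulA. exact (Breg x y Hx Hy).
Qed.

Lemma semilattice_transversal_of_flip (T : Type) (mul : T -> T -> T) (E B : T -> Prop) :
  associative_op mul -> semilattice_transversal (flip mul) E B ->
  semilattice_transversal mul E B.
Proof.
  intros mulA [EB [Emul [Eidem [Ecomm Binv]]]].
  split; [exact EB|split; [|split; [exact Eidem|split]]].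
  - intros a b Ha Hb. exact (Emul b a Hb Ha).
  - intros p q Hp Hq. exact (Ecomm q p Hq Hp).
  - intros x Hx. destruct (Binv x Hx) as [y [[xy Ey] yuniq]].
    exists y. split; [split; [apply (inverse_of_flip mulA); assumption|exact Ey]|].
    intros z [xz Ez]. apply yuniq. split; [apply (inverse_of_flip mulA); assumption|exact Ez].
Qed.

Lemma right_regular_band_transversal_of_idem_R (T : Type) (mul : T -> T -> T) (E B : T -> Prop) :
  associative_op mul ->
  (forall e f, idempotent mul e -> idempotent mul f -> idempotent mul (mul e f)) ->
  subsemigroup mul E -> (forall p, E p -> idempotent mul p) ->
  (forall p q, E p -> E q -> mul p q = mul q p) ->
  (forall g, idempotent mul g -> exists t, E t /\ inverse_of mul g t) ->
  (forall g t t', idempotent mul g ->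
     E t -> E t' -> inverse_of mul g t -> inverse_of mul g t' -> t = t') ->
  (forall f, B f <-> idempotent mul f /\ exists q, E q /\ idem_R mul f q) ->
  right_regular_band mul B /\ semilattice_transversal mul E B.
Proof.
  intros mulA idem_mul E_mul E_idem E_comm E_inv E_uniq B_char.
  pose proof (flip_associative mulA) as flipA.
  assert (flip_idem_mul : forall e f, idempotent (flip mul) e -> idempotent (flip mul) f ->
            idempotent (flip mul) (flip mul e f)) by (intros e f He Hf; exact (idem_mul f e Hf He)).
  assert (flip_E_mul : subsemigroup (flip mul) E) by (intros a b Ha Hb; exact (E_mul b a Hb Ha)).
  assert (flip_E_comm : forall p q, E p -> E q -> flip mul p q = flip mul q p)
    by (intros p q Hp Hq; exact (E_comm q p Hq Hp)).
  assert (flip_E_inv : forall g, idempotent (flip mul) g ->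
            exists t, E t /\ inverse_of (flip mul) g t).
  { intros g Ig. destruct (E_inv g Ig) as [t [Et gt]].
    exists t. split; [exact Et|apply (inverse_of_flip mulA); assumption]. }
  assert (flip_E_uniq : forall g t t', idempotent (flip mul) g -> E t -> E t' ->
            inverse_of (flip mul) g t -> inverse_of (flip mul) g t' -> t = t').
  { intros g t t' Ig Et Et' gt gt'.
    apply (inverse_of_flip mulA) in gt, gt'. exact (E_uniq g t t' Ig Et Et' gt gt'). }
  destruct (left_regular_band_transversal_of_idem_L flipA flip_idem_mul flip_E_mul E_idem
              flip_E_comm flip_E_inv flip_E_uniq B B_char) as [Breg Btr].
  exact (conj (right_regular_band_of_flip mulA Breg) (semilattice_transversal_of_flip mulA Btr)).
Qed.

Section AdequateTransversal.
Variables (T : Type) (mul : T -> T -> T) (S0 : T -> Prop).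
Hypothesis mulA : associative_op mul.
Hypothesis S_quasi_adequate : quasi_adequate mul.
Hypothesis S0_transversal : adequate_transversal mul S0.
Local Infix "*" := mul.

Lemma idempotent_mul e f : idempotent mul e -> idempotent mul f -> idempotent mul (e * f).
Proof. exact (proj2 S_quasi_adequate e f). Qed.

Lemma E0_comm p q : E0 mul S0 p -> E0 mul S0 q -> p * q = q * p.
Proof. intros [Sp Ip] [Sq Iq]. exact (proj2 (proj1 S0_transversal) p q Sp Sq Ip Iq). Qed.

Lemma E0_mul : subsemigroup mul (E0 mul S0).
Proof.
  intros p q [Sp Ip] [Sq Iq].
  split; [exact (proj1 (proj1 (proj1 S0_transversal)) p q Sp Sq)|exact (idempotent_mul Ip Iq)].
Qed.

Lemma decomp_exists x : exists xb e f, decomp mul S0 x xb e f.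
Proof. exact (proj1 (proj2 (proj2 S0_transversal) x)). Qed.

Lemma decomp_unique x xb e f xb' e' f' :
  decomp mul S0 x xb e f -> decomp mul S0 x xb' e' f' -> xb = xb'.
Proof. exact (proj2 (proj2 (proj2 S0_transversal) x) xb e f xb' e' f'). Qed.

Lemma Rstar_in_full_of_S0 a b : S0 a -> S0 b -> Rstar_in mul S0 a b -> Rstar_in mul (@fullset T) a b.
Proof. intros Sa Sb. apply (proj2 (proj2 (proj1 (proj2 S0_transversal))) a b Sa Sb). Qed.

Lemma Lstar_in_full_of_S0 a b : S0 a -> S0 b -> Lstar_in mul S0 a b -> Lstar_in mul (@fullset T) a b.
Proof. intros Sa Sb. apply (proj1 (proj2 (proj1 (proj2 S0_transversal))) a b Sa Sb). Qed.

Lemma is_plus_absorb b P : is_plus mul S0 b P -> P * b = b.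
Proof. intros [SP [IP bRP]]. exact (proj2 (bRP (Some P) None SP I) IP). Qed.

Lemma is_star_absorb b Q : is_star mul S0 b Q -> b * Q = b.
Proof. intros [SQ [IQ bLQ]]. exact (proj2 (bLQ (Some Q) None SQ I) IQ). Qed.

Lemma is_plus_E0_eq t P : E0 mul S0 t -> is_plus mul S0 t P -> P = t.
Proof.
  intros [St It] tP. pose proof (is_plus_absorb tP) as Pt.
  destruct tP as [SP [IP tRP]].
  assert (tP : t * P = P) by exact (proj1 (tRP (Some t) None St I) It).
  rewrite <- tP, (E0_comm (conj St It) (conj SP IP)). exact Pt.
Qed.

Lemma is_star_E0_eq t Q : E0 mul S0 t -> is_star mul S0 t Q -> Q = t.
Proof.
  intros [St It] tQ. pose proof (is_star_absorb tQ) as tQ'.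
  destruct tQ as [SQ [IQ tLQ]].
  assert (Qt : Q * t = Q) by exact (proj1 (tLQ (Some t) None St I) It).
  rewrite <- Qt, (E0_comm (conj SQ IQ) (conj St It)). exact tQ'.
Qed.

Lemma decomp_E0_idem_LR x t e f :
  E0 mul S0 t -> decomp mul S0 x t e f -> idem_L mul e t /\ idem_R mul f t.
Proof.
  intros Et [_ [Ie [If [_ [[P [tP eP]] [Q [tQ fQ]]]]]]].
  rewrite (is_plus_E0_eq Et tP) in eP. rewrite (is_star_E0_eq Et tQ) in fQ.
  split; [exact (greenL_idem_L mulA Ie (proj2 Et) eP)|exact (greenR_idem_R mulA If (proj2 Et) fQ)].
Qed.

Lemma decomp_of_idem_L_R t e f : E0 mul S0 t -> idempotent mul e -> idempotent mul f ->
  idem_L mul e t -> idem_R mul f t -> decomp mul S0 (e * t * f) t e f.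
Proof.
  intros [St It] Ie If eLt fRt.
  split; [exact St|split; [exact Ie|split; [exact If|split; [reflexivity|split]]]].
  - exists t. split; [repeat split; auto|exact (greenL_of_idem_L eLt)].
  - exists t. split; [repeat split; auto|exact (greenR_of_idem_R fRt)].
Qed.

Lemma decomp_of_E0_inverse x t :
  E0 mul S0 t -> inverse_of mul x t -> decomp mul S0 x t (x * t) (t * x).
Proof.
  intros Et [xtx txt]. pose proof (proj2 Et) as It.
  rewrite <- mulA in xtx, txt.
  assert (x_eq : x = x * t * t * (t * x)).
  { symmetry. arewrite mulA It. arewrite mulA It. exact xtx. }
  rewrite x_eq at 1. apply decomp_of_idem_L_R; [exact Et| | | |].
  - unfold idempotent. arewrite mulA xtx. reflexivity.
  - unfold idempotent. arewrite mulA txt. reflexivity.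
  - split; [arewrite mulA It|arewrite mulA txt]; reflexivity.
  - split; [arewrite mulA It|arewrite mulA txt]; reflexivity.
Qed.

Lemma E0_inverse_unique x t t' : E0 mul S0 t -> E0 mul S0 t' ->
  inverse_of mul x t -> inverse_of mul x t' -> t = t'.
Proof.
  intros Et Et' xt xt'.
  exact (decomp_unique (decomp_of_E0_inverse Et xt) (decomp_of_E0_inverse Et' xt')).
Qed.

Lemma decomp_idempotent_E0 g b e f :
  idempotent mul g -> decomp mul S0 g b e f -> E0 mul S0 b.
Proof.
  intros Ig [Sb [Ie [If [Hg [[P [bP eP]] [Q [bQ fQ]]]]]]].
  pose proof (is_plus_absorb bP) as Pb. pose proof (is_star_absorb bQ) as bQ'.
  destruct bP as [SP [IP bRP]]. destruct bQ as [SQ [IQ bLQ]].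
  destruct (greenL_idem_L mulA Ie IP eP) as [eP' Pe].
  destruct (greenR_idem_R mulA If IQ fQ) as [Qf fQ'].
  assert (bhb : b * (f * e) * b = b).
  { transitivity (P * (g * (g * Q))).
    - rewrite Hg. arewrite mulA Pe. arewrite mulA fQ'. arewrite mulA bQ'.
      arewrite mulA Pb. reflexivity.
    - arewrite mulA Ig. rewrite Hg. arewrite mulA Pe. arewrite mulA fQ'.
      arewrite mulA bQ'. exact Pb. }
  assert (bh : b * (f * e) = P).
  { assert (bhP : b * (f * e) * P = P)
      by exact (proj1 (Rstar_in_full_of_S0 Sb SP bRP (Some (b * (f * e))) None I I) bhb).
    rewrite <- bhP. arewrite mulA eP'. reflexivity. }
  assert (hb : f * e * b = Q).
  { assert (Qhb : Q * (f * e * b) = Q).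
    { apply (proj1 (Lstar_in_full_of_S0 Sb SQ bLQ (Some (f * e * b)) None I I)). simpl.
      rewrite mulA. exact bhb. }
    rewrite <- Qhb. arewrite mulA Qf. reflexivity. }
  assert (b_PQ : b = P * Q).
  { rewrite <- bh, <- hb. arewrite mulA (idempotent_mul If Ie).
    rewrite <- bhb at 1. repeat rewrite <- mulA. reflexivity. }
  rewrite b_PQ. exact (E0_mul (conj SP IP) (conj SQ IQ)).
Qed.

Lemma idempotent_E0_inverse g :
  idempotent mul g -> exists t, E0 mul S0 t /\ inverse_of mul g t.
Proof.
  intros Ig. destruct (decomp_exists g) as [b [e [f D]]].
  pose proof (decomp_idempotent_E0 Ig D) as Eb. pose proof (proj2 Eb) as Ib.
  destruct (decomp_E0_idem_LR Eb D) as [[eb be] [bf fb]].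
  destruct D as [_ [_ [_ [Hg _]]]].
  exists b. split; [exact Eb|split; rewrite Hg].
  - arewrite mulA fb. arewrite mulA Ib. arewrite mulA be. arewrite mulA Ib. reflexivity.
  - arewrite mulA be. arewrite mulA fb. arewrite mulA Ib. exact Ib.
Qed.

Lemma Iset_char e :
  Iset mul S0 e <-> idempotent mul e /\ exists p, E0 mul S0 p /\ idem_L mul e p.
Proof.
  split.
  - intros [x [xb [f [_ [Ie [_ [_ [[P [[SP [IP _]] eP]] _]]]]]]]].
    split; [exact Ie|exists P; split; [exact (conj SP IP)|exact (greenL_idem_L mulA Ie IP eP)]].
  - intros [Ie [p [Ep eLp]]]. exists (e * p * p), p, p.
    apply (decomp_of_idem_L_R Ep Ie (proj2 Ep) eLp). split; exact (proj2 Ep).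
Qed.

Lemma Lambdaset_char f :
  Lambdaset mul S0 f <-> idempotent mul f /\ exists q, E0 mul S0 q /\ idem_R mul f q.
Proof.
  split.
  - intros [x [xb [e [_ [_ [If [_ [_ [Q [[SQ [IQ _]] fQ]]]]]]]]]].
    split; [exact If|exists Q; split; [exact (conj SQ IQ)|exact (greenR_idem_R mulA If IQ fQ)]].
  - intros [If [q [Eq fRq]]]. exists (q * q * f), q, q.
    apply (decomp_of_idem_L_R Eq (proj2 Eq) If); [|exact fRq]. split; exact (proj2 Eq).
Qed.

Lemma x0_of_E0_inverse x t : E0 mul S0 t -> inverse_of mul x t -> is_x0 mul S0 x t.
Proof.
  intros Et xt. split; [exact xt|]. intros xb e f D.
  rewrite <- (decomp_unique (decomp_of_E0_inverse Et xt) D) in D.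
  destruct (decomp_E0_idem_LR Et D) as [[et te] [tf ft]].
  destruct D as [_ [_ [_ [Hx _]]]]. pose proof (proj2 Et) as It.
  split; rewrite Hx.
  - arewrite mulA ft. arewrite mulA It. exact et.
  - arewrite mulA te. arewrite mulA It. exact tf.
Qed.

Lemma x0_unique x y z : is_x0 mul S0 x y -> is_x0 mul S0 x z -> z = y.
Proof.
  intros [[_ yxy] Hy] [[_ zxz] Hz].
  destruct (decomp_exists x) as [xb [e [f D]]].
  destruct (Hy _ _ _ D) as [xy yx]. destruct (Hz _ _ _ D) as [xz zx].
  rewrite <- zxz, zx, <- yx, <- mulA, xz, <- xy, mulA. exact yxy.
Qed.

Lemma x0_exists_unique x : (exists t, E0 mul S0 t /\ inverse_of mul x t) ->
  exists y, (is_x0 mul S0 x y /\ E0 mul S0 y) /\ forall z, is_x0 mul S0 x z -> z = y.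
Proof.
  intros [t [Et xt]]. pose proof (x0_of_E0_inverse Et xt) as x0t.
  exists t. split; [exact (conj x0t Et)|]. intros z x0z. exact (x0_unique x0t x0z).
Qed.
End AdequateTransversal.

Theorem lemma2p3 (T : Type) (mul : T -> T -> T) (S0 : T -> Prop)
  (Hassoc : associative_op mul)
  (HS : quasi_adequate mul)
  (HS0 : adequate_transversal mul S0) :
  left_regular_band mul (Iset mul S0) /\
  right_regular_band mul (Lambdaset mul S0) /\
  semilattice_transversal mul (E0 mul S0) (Iset mul S0) /\
  semilattice_transversal mul (E0 mul S0) (Lambdaset mul S0) /\
  (forall x, Iset mul S0 x \/ Lambdaset mul S0 x ->
     exists y, (is_x0 mul S0 x y /\ E0 mul S0 y) /\
               forall z, is_x0 mul S0 x z -> z = y) /\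
  (forall x, E0 mul S0 x -> forall y, is_x0 mul S0 x y -> y = x) /\
  (forall x, E0 mul S0 x -> is_x0 mul S0 x x).
Proof.
  assert (E0_idem : forall p, E0 mul S0 p -> idempotent mul p) by (intros p [_ Ip]; exact Ip).
  assert (E0_uniq : forall g t t', idempotent mul g -> E0 mul S0 t -> E0 mul S0 t' ->
            inverse_of mul g t -> inverse_of mul g t' -> t = t')
    by (intros g t t' _; apply (E0_inverse_unique Hassoc HS0)).
  destruct (left_regular_band_transversal_of_idem_L Hassoc (idempotent_mul HS) (E0_mul HS HS0)
              E0_idem (E0_comm HS0) (idempotent_E0_inverse Hassoc HS HS0) E0_uniq
              _ (Iset_char S0 Hassoc)) as [Ireg Itr].
  destruct (right_regular_band_transversal_of_idem_R _ Hassoc (idempotent_mul HS) (E0_mul HS HS0)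
              E0_idem (E0_comm HS0) (idempotent_E0_inverse Hassoc HS HS0) E0_uniq
              (Lambdaset_char S0 Hassoc)) as [Lreg Ltr].
  assert (E0_x0 : forall x, E0 mul S0 x -> is_x0 mul S0 x x).
  { intros x Ex. apply (x0_of_E0_inverse Hassoc HS0 Ex).
    split; rewrite (E0_idem x Ex); exact (E0_idem x Ex). }
  split; [exact Ireg|split; [exact Lreg|split; [exact Itr|split; [exact Ltr|split; [|split]]]]].
  - destruct Itr as [_ [_ [_ [_ I_inv]]]]. destruct Ltr as [_ [_ [_ [_ L_inv]]]].
    intros x Hx. apply (x0_exists_unique Hassoc HS0).
    destruct Hx as [Ix|Lx];
      [destruct (I_inv x Ix) as [t [[xt Et] _]]|destruct (L_inv x Lx) as [t [[xt Et] _]]];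
      exists t; auto.
  - intros x Ex y x0y. exact (x0_unique Hassoc HS0 (E0_x0 x Ex) x0y).
  - exact E0_x0.
Qed.
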